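(* There does not exist an arrangement of lines in $\mathbb{C}\mathbb{P}^2$ defined over $\mathbb{R}$ (i.e. each line is the zero set of a linear form with real coefficients) which supports a $4$-net structure.
   Context: Let $\overline{\mathcal{A}}$ be a finite arrangement of lines in $\mathbb{C}\mathbb{P}^2$. A $4$-net (i.e. a $(4,d)$-net, $d\ge2$) on $\overline{\mathcal{A}}$ is a partition $\overline{\mathcal{A}}=\overline{\mathcal{A}}_1\sqcup\overline{\mathcal{A}}_2\sqcup\overline{\mathcal{A}}_3\sqcup\overline{\mathcal{A}}_4$ together with a set $\mathcal{X}\subset\mathbb{C}\mathbb{P}^2$ of points such that: (i) $|\overline{\mathcal{A}}_1|=\dots=|\overline{\mathcal{A}}_4|=d$; (ii) if $\overline{H}\in\overline{\mathcal{A}}_i$, $\overline{H}'\in\overline{\mathcal{A}}_j$ with $i\neq j$, then $\overline{H}\cap\overline{H}'\in\mathcal{X}$; (iii) for every $p\in\mathcal{X}$ and every $i$, exactly one line of $\overline{\mathcal{A}}_i$ passes through $p$; (iv) for any $\overline{H},\overline{H}'\in\overline{\mathcal{A}}_i$ there is a sequence $\overline{H}=\overline{H}'_0,\overline{H}'_1,\dots,\overline{H}'_r=\overline{H}'$ in $\overline{\mathcal{A}}_i$ with $\overline{H}'_{j-1}\cap\overline{H}'_j\notin\mathcal{X}$ for $1\le j\le r$. *)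

From HB Require Import structures.
From mathcomp Require Import all_boot all_order all_algebra.
From mathcomp Require Import reals.
From mathcomp Require Import complex.
Set Implicit Arguments. Unset Strict Implicit. Unset Printing Implicit Defensive.
Import Order.TTheory GRing.Theory Num.Theory.
Local Open Scope ring_scope.
Local Open Scope complex_scope.

(* Points of CP^2 are represented by nonzero vectors of C^3, C := R[i]
   (the complex numbers over the real numbers R : realType). *)

Definition on_line (R : realType) (a : 'rV[R]_3) (p : 'rV[R[i]]_3) : Prop :=
  \sum_(k < 3) (a 0 k)%:C * p 0 k = 0.

(* A set of points of CP^2 is represented by its cone: a predicate on C^3
   containing only nonzero vectors and stable under nonzero scaling. *)
Definition proj_set (R : realType) (X : 'rV[R[i]]_3 -> Prop) : Prop :=
  (forall p, X p -> p != 0) /\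
  (forall (p : 'rV[R[i]]_3) (c : R[i]), c != 0 -> X p -> X (c *: p)).

(* "the point H ∩ H' belongs to X" (H, H' distinct lines) *)
Definition meet_in (R : realType) (X : 'rV[R[i]]_3 -> Prop) (a b : 'rV[R]_3) : Prop :=
  forall p, p != 0 -> on_line a p -> on_line b p -> X p.

Fixpoint chain (T : Type) (r : T -> T -> Prop) (x : T) (s : seq T) : Prop :=
  match s with
  | [::] => True
  | y :: s' => r x y /\ chain r y s'
  end.

(* An arrangement of 4d distinct real lines, listed as L i a (class i, index a),
   so that the classes A_i = {L i a | a : 'I_d} partition it into 4 blocks
   of size d. *)
Definition real_arrangement4 (R : realType) (d : nat) (L : 'I_4 -> 'I_d -> 'rV[R]_3) : Prop :=
  (forall i a, L i a != 0) /\
  (forall i a j b, (i, a) != (j, b) -> ~ (exists c : R, L j b = c *: L i a)).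

Definition is_4net (R : realType) (d : nat) (L : 'I_4 -> 'I_d -> 'rV[R]_3)
    (X : 'rV[R[i]]_3 -> Prop) : Prop :=
  (2 <= d)%N /\
  proj_set X /\
  (forall i j a b, i != j -> meet_in X (L i a) (L j b)) /\
  (forall p, X p -> forall i, exists! a : 'I_d, on_line (L i a) p) /\
  (forall i (a b : 'I_d), exists s : seq 'I_d,
     chain (fun x y => ~ meet_in X (L i x) (L i y)) a s /\ last a s = b).

(* Kelly's proof of the Sylvester-Gallai theorem, run in the elliptic metric of
   the real projective plane.  In a real 4-net every point where lines of two
   different classes meet lies on a line of each class.  Among all such meet
   points P and lines n of the net not through P, pick a pair with P closest to
   n.  The lines through P of the three classes other than that of n meet n in
   three points; two of them, Q_k and Q_l, lie on the same side of the foot of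
   the perpendicular from P, with Q_k nearer to Q_l than P is.  Then Q_k is
   strictly closer to the line through P and Q_l than P is to n, contradicting
   minimality.  Lines and real points are handled through coordinate vectors in
   R^3: incidence is orthogonality and the meet of two lines is their cross
   product. *)

From HB Require Import structures.
From mathcomp Require Import all_boot all_order all_algebra.
From mathcomp Require Import ring lra.
From mathcomp Require Import reals complex.

Set Implicit Arguments. Unset Strict Implicit. Unset Printing Implicit Defensive.
Import Order.TTheory GRing.Theory Num.Theory.
Local Open Scope ring_scope.

Definition vec (R : Type) := (R * R * R)%type.

Definition dot (R : pzRingType) (a b : vec R) : R :=
  let: (a0, a1, a2) := a in let: (b0, b1, b2) := b in a0 * b0 + a1 * b1 + a2 * b2.

Definition cross (R : pzRingType) (a b : vec R) : vec R :=
  let: (a0, a1, a2) := a in let: (b0, b1, b2) := b in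
  (a1 * b2 - a2 * b1, a2 * b0 - a0 * b2, a0 * b1 - a1 * b0).

Ltac vec_ring :=
  repeat match goal with v : vec _ |- _ => move: v => [[? ?] ?] end;
  rewrite /dot /cross /=; ring.

Section Vectors.
Variable R : realFieldType.
Implicit Types a b : vec R.

Lemma sqr_gt0 (x : R) : (0 < x ^+ 2) = (x != 0).
Proof. by rewrite exprn_even_gt0. Qed.

Lemma dot_cross_l a b : dot a (cross a b) = 0.
Proof. vec_ring. Qed.

Lemma dot_cross_r a b : dot b (cross a b) = 0.
Proof. vec_ring. Qed.

Lemma dot_cross_self a b :
  dot (cross a b) (cross a b) = dot a a * dot b b - dot a b ^+ 2.
Proof. vec_ring. Qed.

Lemma dot_cross_selfC a b : dot (cross a b) (cross a b) = dot (cross b a) (cross b a).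
Proof. vec_ring. Qed.

Lemma dot_self_ge0 a : 0 <= dot a a.
Proof. by case: a => [[a0 a1] a2]; rewrite /dot /=; nra. Qed.

Lemma dot_self_eq0 a : dot a a = 0 -> a = (0, 0, 0).
Proof.
case: a => [[a0 a1] a2]; rewrite /dot /= => h.
have sq0 (x : R) : x ^+ 2 <= 0 -> x = 0.
  by move=> hx; apply/eqP; rewrite -sqrf_eq0 eq_le hx sqr_ge0.
by rewrite (sq0 a0) 1?(sq0 a1) 1?(sq0 a2) //; nra.
Qed.

Lemma cauchy_schwarz a b : dot a b ^+ 2 <= dot a a * dot b b.
Proof. by have := dot_self_ge0 (cross a b); rewrite dot_cross_self subr_ge0. Qed.

Lemma dot_self_gt0_crossl a b :
  0 < dot (cross a b) (cross a b) -> 0 < dot a a.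
Proof.
rewrite dot_cross_self => h; rewrite lt_def dot_self_ge0 andbT.
by apply: contraTneq h => ->; rewrite mul0r sub0r oppr_gt0 -leNgt sqr_ge0.
Qed.

Lemma dot_self_gt0_crossr a b :
  0 < dot (cross a b) (cross a b) -> 0 < dot b b.
Proof. by rewrite dot_cross_selfC; apply: dot_self_gt0_crossl. Qed.

Lemma dot_self_gt0_dot a b : dot a b != 0 -> 0 < dot a a /\ 0 < dot b b.
Proof.
rewrite -sqr_gt0 => ab; have h := lt_le_trans ab (cauchy_schwarz a b).
by split; rewrite lt_def dot_self_ge0 andbT; apply: contraTneq h => ->;
  rewrite ?mul0r ?mulr0 ltxx.
Qed.

Lemma cross_eq0_parallel a b : dot (cross a b) (cross a b) = 0 -> 0 < dot a a ->
  let: (a0, a1, a2) := a in let c := dot a b / dot a a in b = (c * a0, c * a1, c * a2).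
Proof.
move=> /dot_self_eq0; case: a => [[a0 a1] a2]; case: b => [[b0 b1] b2] /= [c0 c1 c2] ha.
have hn : a0 * a0 + a1 * a1 + a2 * a2 != 0 by rewrite gt_eqF.
have key x y : x * (a0 * a0 + a1 * a1 + a2 * a2) = (a0 * b0 + a1 * b1 + a2 * b2) * y ->
    x = (a0 * b0 + a1 * b1 + a2 * b2) / (a0 * a0 + a1 * a1 + a2 * a2) * y.
  by move=> e; rewrite mulrAC -[x](mulfK hn) e.
congr (_, _, _); apply: key; apply/eqP; rewrite -subr_eq0; apply/eqP.
- by transitivity (a2 * (a2 * b0 - a0 * b2) - a1 * (a0 * b1 - a1 * b0));
    [ring | rewrite c1 c2; ring].
- by transitivity (a0 * (a0 * b1 - a1 * b0) - a2 * (a1 * b2 - a2 * b1));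
    [ring | rewrite c0 c2; ring].
- by transitivity (a1 * (a1 * b2 - a2 * b1) - a0 * (a2 * b0 - a0 * b2));
    [ring | rewrite c0 c1; ring].
Qed.

End Vectors.

Definition ord3_0 : 'I_3 := @Ordinal 3 0 isT.
Definition ord3_1 : 'I_3 := @Ordinal 3 1 isT.
Definition ord3_2 : 'I_3 := @Ordinal 3 2 isT.

Section KellyPairs.
Variables (R : realFieldType) (s : R).
Hypothesis s_gt0 : 0 < s.
Implicit Types xi yi xj yj xk yk : R.

(* In the Kelly step, (x_k, y_k) are coordinates of a point Q_k of the line n
   along the foot of the perpendicular from P and along n, and s * x_i * x_j +
   y_i * y_j is proportional to the scalar product of Q_i and Q_j: a Kelly pair
   (i, j) has Q_i and Q_j on the same side of the foot, Q_i nearer to it, and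
   Q_i, Q_j not orthogonal. *)
Definition kelly_pair xi yi xj yj :=
  [/\ 0 <= xi * yi * (xj * yj), xj ^+ 2 * yi ^+ 2 <= xi ^+ 2 * yj ^+ 2
    & s * xi * xj + yi * yj != 0].

Lemma kelly_pair_ineq xi yi xj yj : kelly_pair xi yi xj yj ->
  s * xj ^+ 2 * (s * xi ^+ 2 + yi ^+ 2) <= (s * xi * xj + yi * yj) ^+ 2.
Proof.
case=> same_sign ordered _.
set u := xi * yj; set v := xj * yi.
have uv : v ^+ 2 <= u * v.
  have h1 : 0 <= u * v by rewrite /u /v; nra.
  have h2 : v ^+ 2 <= u ^+ 2 by rewrite /u /v !exprMn mulrC [X in _ <= X]mulrC; nra.
  nra.
have := s_gt0; have : 0 <= yi ^+ 2 * yj ^+ 2 by nra.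
rewrite /u /v in uv *; nra.
Qed.

Lemma kelly_pair_nearer W t A B PP xi yi xj yj : 0 < W -> 0 < t ->
  kelly_pair xi yi xj yj ->
  yi * yi = W * A - s * xi * xi -> yi * yj = W * B - s * xi * xj -> W = s * PP - t ->
  xj ^+ 2 * A < B ^+ 2 * PP.
Proof.
move=> W_gt0 t_gt0 pair eA eB eW.
have ineq := kelly_pair_ineq pair.
case: pair => _ _ E_neq0.
have eA' : W * A = s * xi ^+ 2 + yi ^+ 2 by rewrite [yi ^+ 2]expr2 eA; ring.
have eB' : W * B = s * xi * xj + yi * yj by rewrite eB; ring.
have eP : s * PP = W + t by rewrite eW; ring.
rewrite -(ltr_pM2l (mulr_gt0 s_gt0 (exprn_gt0 2 W_gt0))).
have -> : s * W ^+ 2 * (xj ^+ 2 * A) = W * (s * xj ^+ 2 * (W * A)) by ring.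
have -> : s * W ^+ 2 * (B ^+ 2 * PP) = (W * B) ^+ 2 * (s * PP) by ring.
rewrite eA' eB' eP.
move: E_neq0 ineq; set E := s * xi * xj + yi * yj; set G := s * xj ^+ 2 * _ => E_neq0 ineq.
have E_gt0 : 0 < E ^+ 2 by rewrite sqr_gt0.
have : W * G <= W * E ^+ 2 by rewrite ler_pM2l.
nra.
Qed.

Lemma kelly_pair_of_ordered xi yi xj yj xk yk :
  xi * yj - xj * yi != 0 -> xi * yk - xk * yi != 0 -> xj * yk - xk * yj != 0 ->
  0 <= xi * yi * (xj * yj) -> xj ^+ 2 * yi ^+ 2 <= xi ^+ 2 * yj ^+ 2 ->
  kelly_pair xi yi xj yj \/ kelly_pair xi yi xk yk.
Proof.
move=> dij dik djk same_sign ordered.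
have [e|e] := eqVneq (s * xi * xj + yi * yj) 0; last by left.
right.
have xij : xi * xj = 0.
  have h : (xi * xj) ^+ 2 * s <= 0 by have := s_gt0; nra.
  by apply/eqP; rewrite -sqrf_eq0 eq_le sqr_ge0 andbT -(pmulr_lle0 _ s_gt0).
have yij : yi * yj = 0 by rewrite -e -mulrA xij mulr0 add0r.
move/eqP: xij; rewrite mulf_eq0 => /orP[/eqP xi0|/eqP xj0].
  move/eqP: yij; rewrite mulf_eq0 => /orP[/eqP yi0|/eqP yj0].
    by move: dij; rewrite xi0 yi0 => /eqP[]; ring.
  have xjyi : xj * yi = 0.
    move: ordered; rewrite xi0 yj0 expr0n /= mul0r -exprMn => h.
    by apply/eqP; rewrite -sqrf_eq0 eq_le h sqr_ge0.
  by move: dij; rewrite xi0 yj0 xjyi => /eqP[]; ring.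
have yj0 : yj != 0 by apply: contraNneq dij => ->; rewrite xj0; apply/eqP; ring.
have yi0 : yi = 0 by move/eqP: yij; rewrite mulf_eq0 (negbTE yj0) orbF => /eqP.
have xi0 : xi != 0 by apply: contraNneq dij => ->; rewrite xj0; apply/eqP; ring.
have xk0 : xk != 0 by apply: contraNneq djk => ->; rewrite xj0; apply/eqP; ring.
split; first by rewrite yi0 !(mul0r, mulr0).
  by rewrite yi0 expr0n /= mulr0 mulr_ge0 ?sqr_ge0.
by rewrite yi0 mul0r addr0 !mulf_neq0 // gt_eqF.
Qed.

Lemma kelly_pair_of_same_sign xi yi xj yj xk yk :
  xi * yj - xj * yi != 0 -> xi * yk - xk * yi != 0 -> xj * yk - xk * yj != 0 ->
  0 <= xi * yi * (xj * yj) ->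
  [\/ kelly_pair xi yi xj yj, kelly_pair xi yi xk yk,
      kelly_pair xj yj xi yi | kelly_pair xj yj xk yk].
Proof.
move=> dij dik djk same_sign.
have [ordered|ordered] := lerP (xj ^+ 2 * yi ^+ 2) (xi ^+ 2 * yj ^+ 2).
  by case: (kelly_pair_of_ordered dij dik djk same_sign ordered); [apply: Or41 | apply: Or42].
have dji : xj * yi - xi * yj != 0 by rewrite -oppr_eq0 opprB.
rewrite mulrC in same_sign.
by case: (kelly_pair_of_ordered dji djk dik same_sign (ltW ordered)) => h;
  [apply: Or43 | apply: Or44].
Qed.

Lemma exists_kelly_pair (x y : 'I_3 -> R) :
  (forall k l, k != l -> x k * y l - x l * y k != 0) ->
  exists k l, k != l /\ kelly_pair (x k) (y k) (x l) (y l).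
Proof.
move=> indep.
suff [i [j [k [[ij ik jk] same_sign]]]] : exists i j k,
    [/\ i != j, i != k & j != k] /\ 0 <= x i * y i * (x j * y j).
  have [] := kelly_pair_of_same_sign (indep _ _ ij) (indep _ _ ik) (indep _ _ jk) same_sign.
  - by exists i, j.
  - by exists i, k.
  - by exists j, i; rewrite eq_sym.
  - by exists j, k.
pose p k := x k * y k.
have [h01|h01] := lerP 0 (p ord3_0 * p ord3_1); first by exists ord3_0, ord3_1, ord3_2.
have [h02|h02] := lerP 0 (p ord3_0 * p ord3_2); first by exists ord3_0, ord3_2, ord3_1.
by exists ord3_1, ord3_2, ord3_0; split => //; rewrite -/(p ord3_1) -/(p ord3_2); nra.
Qed.

End KellyPairs.

Section PencilIdentities.
Variable R : comPzRingType.
Implicit Types a b c p : vec R.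

Lemma dot_cross_perm a b c : dot b (cross a c) = - dot c (cross a b).
Proof. vec_ring. Qed.

Lemma dot_cross_cross_common a b c :
  dot (cross (cross a c) (cross b c)) (cross (cross a c) (cross b c)) =
  dot c (cross a b) ^+ 2 * dot c c.
Proof. vec_ring. Qed.

Lemma dot_cross_cross_orth p b c : dot b p = 0 ->
  dot (cross p (cross b c)) (cross p (cross b c)) = dot c p ^+ 2 * dot b b.
Proof.
have -> : dot (cross p (cross b c)) (cross p (cross b c)) =
    dot c p ^+ 2 * dot b b - dot b p * (2 * dot c p * dot b c - dot b p * dot c c).
  by vec_ring.
by move->; rewrite mul0r subr0.
Qed.

Lemma dot_cross_pencil a b c p : dot a p = 0 -> dot b p = 0 ->
  dot (cross a b) (cross a b) * dot c p = dot (cross a b) p * dot c (cross a b).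
Proof.
have -> : dot (cross a b) (cross a b) * dot c p = dot (cross a b) p * dot c (cross a b)
    - dot a p * dot c (cross (cross a b) b) + dot b p * dot c (cross (cross a b) a).
  by vec_ring.
by move=> -> ->; rewrite !mul0r subr0 addr0.
Qed.

Lemma dot_cross_det p n a b :
  dot p (cross a n) * dot (cross n p) (cross b n) -
  dot p (cross b n) * dot (cross n p) (cross a n) =
  dot n (cross a b) * dot (cross n p) (cross n p).
Proof. vec_ring. Qed.

Lemma dot_cross_gram p n a b :
  dot (cross n p) (cross a n) * dot (cross n p) (cross b n) =
  dot (cross n p) (cross n p) * dot (cross a n) (cross b n) -
  dot n n * dot p (cross a n) * dot p (cross b n).
Proof. vec_ring. Qed.

Lemma dot_cross_cross_normal n a :
  dot (cross n (cross a n)) (cross n (cross a n)) =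
  dot n n * dot (cross a n) (cross a n).
Proof. vec_ring. Qed.

Lemma dot_cross_cross_normal_proj p n a :
  dot n n * dot p (cross a n) = dot (cross n p) (cross n (cross a n)).
Proof. vec_ring. Qed.

End PencilIdentities.

Section Kelly.
Variable R : realFieldType.

(* For a line with normal a and a point x, [cos2 a x] is the squared sine of
   the elliptic distance from x to the line. *)
Definition cos2 (u v : vec R) : R := dot u v ^+ 2 / (dot u u * dot v v).

(* q is strictly closer to r than p is, comparing squared cosines of angles. *)
Definition nearer (p q r : vec R) : Prop := dot p r ^+ 2 * dot q q < dot q r ^+ 2 * dot p p.

Variables (n P : vec R) (m : 'I_3 -> vec R).
Hypothesis nP : dot n P != 0.
Hypothesis mP : forall k, dot (m k) P = 0.
Hypothesis mm : forall k l, k != l -> 0 < dot (cross (m k) (m l)) (cross (m k) (m l)).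

Local Notation Q k := (cross (m k) n).

Let n_gt0 : 0 < dot n n. Proof. by case: (dot_self_gt0_dot nP). Qed.
Let P_gt0 : 0 < dot P P. Proof. by case: (dot_self_gt0_dot nP). Qed.

Lemma pencil_meet_off_line k l : k != l -> dot n (cross (m k) (m l)) != 0.
Proof.
move=> kl; apply: contra_neq nP => nkl; apply/eqP.
have := dot_cross_pencil n (mP k) (mP l); rewrite nkl mulr0 => /eqP.
by rewrite mulf_eq0 (gt_eqF (mm kl)).
Qed.

Lemma meet_self_gt0 k l : k != l -> 0 < dot (Q k) (Q k).
Proof.
move=> kl; apply: (@dot_self_gt0_crossl _ _ (Q l)).
by rewrite dot_cross_cross_common mulr_gt0 // sqr_gt0 pencil_meet_off_line.
Qed.

(* The line_triples P Q_l and Q_k Q_l share their angle at Q_l, so by the sine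
   law the distances to be compared are in the ratio of the sides P Q_l and
   Q_k Q_l. *)
Lemma kelly_step_of_nearer k l : k != l -> nearer P (Q k) (Q l) ->
  dot (m l) (Q k) != 0 /\ cos2 (m l) (Q k) < cos2 n P.
Proof.
move=> kl near; have ml_gt0 := dot_self_gt0_crossr (mm kl).
have Qk_gt0 := meet_self_gt0 kl.
split; first by rewrite dot_cross_perm oppr_eq0 pencil_meet_off_line.
have nP2_gt0 : 0 < dot n P ^+ 2 by rewrite sqr_gt0.
rewrite /cos2 dot_cross_perm sqrrN.
rewrite ltr_pdivrMr ?mulr_gt0 // mulrAC ltr_pdivlMr ?mulr_gt0 //.
rewrite mulrA -dot_cross_cross_common mulrA -(dot_cross_cross_orth n (mP l)).
rewrite (dot_cross_self (Q k)) (dot_cross_self P).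
move: near; rewrite /nearer.
move: (dot (Q k) (Q k)) (dot (Q l) (Q l)) (dot (Q k) (Q l)) (dot P (Q l)) (dot P P).
move=> A B C E F; nra.
Qed.

Lemma exists_nearer_polar : dot (cross n P) (cross n P) = 0 ->
  exists k l, k != l /\ nearer P (Q k) (Q l).
Proof.
move=> nP_par.
have P_orth k : dot P (Q k) = 0.
  have := cauchy_schwarz (cross n P) (cross n (Q k)).
  rewrite -dot_cross_cross_normal_proj nP_par mul0r => h.
  have /eqP : dot n n * dot P (Q k) = 0.
    by apply/eqP; rewrite -sqrf_eq0 eq_le h sqr_ge0.
  by rewrite mulf_eq0 (gt_eqF n_gt0) => /eqP.
have near k l : dot (Q k) (Q l) != 0 -> nearer P (Q k) (Q l).
  by move=> kl; rewrite /nearer P_orth expr0n mul0r mulr_gt0 // sqr_gt0.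
have [Q01|Q01] := eqVneq (dot (Q ord3_0) (Q ord3_1)) 0; last by exists ord3_0, ord3_1; auto.
have [Q02|Q02] := eqVneq (dot (Q ord3_0) (Q ord3_2)) 0; last by exists ord3_0, ord3_2; auto.
have /eqP := dot_cross_det (Q ord3_0) n (m ord3_1) (m ord3_2).
rewrite Q01 Q02 !mul0r subr0 dot_cross_cross_normal eq_sym !mulf_eq0.
rewrite (negbTE (@pencil_meet_off_line ord3_1 ord3_2 isT)) (gt_eqF n_gt0).
by rewrite (gt_eqF (@meet_self_gt0 ord3_0 ord3_1 isT)).
Qed.

Lemma exists_nearer_generic : 0 < dot (cross n P) (cross n P) ->
  exists k l, k != l /\ nearer P (Q k) (Q l).
Proof.
move=> W_gt0.
pose x k := dot P (Q k); pose y k := dot (cross n P) (Q k).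
have indep k l : k != l -> x k * y l - x l * y k != 0.
  by move=> kl; rewrite /x /y dot_cross_det mulf_neq0 ?pencil_meet_off_line // gt_eqF.
have [k [l [kl pair]]] := exists_kelly_pair n_gt0 indep.
exists k, l; split=> //; apply: (kelly_pair_nearer (t := dot n P ^+ 2) n_gt0 W_gt0 _ pair).
- by rewrite sqr_gt0.
- by rewrite /y dot_cross_gram.
- by rewrite /y dot_cross_gram.
- by rewrite dot_cross_self.
Qed.

Lemma kelly_step :
  exists k l, k != l /\ dot (m l) (Q k) != 0 /\ cos2 (m l) (Q k) < cos2 n P.
Proof.
suff [k [l [kl near]]] : exists k l, k != l /\ nearer P (Q k) (Q l).
  by exists k, l; split=> //; apply: kelly_step_of_nearer.
have := dot_self_ge0 (cross n P); rewrite le_eqVlt => /orP[/eqP/esym|].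
- exact: exists_nearer_polar.
- exact: exists_nearer_generic.
Qed.

End Kelly.

Section Embedding.
Variable R : realType.
Local Open Scope complex_scope.

Definition coords (l : 'rV[R]_3) : vec R := (l 0 ord3_0, l 0 ord3_1, l 0 ord3_2).

Definition point_of (x : vec R) : 'rV[R[i]]_3 :=
  \row_(k < 3) (nth 0 [:: x.1.1; x.1.2; x.2] k)%:C.

Lemma on_line_point_of l x : on_line l (point_of x) <-> dot (coords l) x = 0.
Proof.
case: x => [[x0 x1] x2].
rewrite /on_line !big_ord_recl big_ord0 !mxE /=.
have -> : lift ord0 (lift ord0 ord0) = ord3_2 :> 'I_3 by apply: val_inj.
have -> : lift ord0 ord0 = ord3_1 :> 'I_3 by apply: val_inj.
have -> : ord0 = ord3_0 :> 'I_3 by apply: val_inj.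
rewrite -!rmorphM addr0 addrA -!rmorphD /=.
by split=> [[->]|->].
Qed.

Lemma point_of_neq0 x : 0 < dot x x -> point_of x != 0.
Proof.
case: x => [[x0 x1] x2] x_gt0; apply/eqP => x0_eq.
have coord0 k := congr1 (fun M : 'rV[R[i]]_3 => M 0 k) x0_eq.
move: (coord0 ord3_0) (coord0 ord3_1) (coord0 ord3_2); rewrite !mxE /= => [[e0]] [e1] [e2].
by move: x_gt0; rewrite /= e0 e1 e2 !mulr0 !addr0 ltxx.
Qed.

Lemma coords_inj : injective coords.
Proof.
move=> u v [e0 e1 e2]; apply/matrixP => i j; rewrite (ord1 i).
case: j => [[|[|[|j]]] hj] //.
- by have -> : Ordinal hj = ord3_0 by apply: val_inj.
- by have -> : Ordinal hj = ord3_1 by apply: val_inj.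
- by have -> : Ordinal hj = ord3_2 by apply: val_inj.
Qed.

End Embedding.

Section RealNet.
Variables (R : realType) (d : nat) (L : 'I_4 -> 'I_d -> 'rV[R]_3).
Variable X : 'rV[R[i]]_3 -> Prop.
Hypothesis arrangement : real_arrangement4 L.
Hypothesis net : is_4net L X.

Let line (x : 'I_4 * 'I_d) : vec R := coords (L x.1 x.2).

Lemma line_self_gt0 x : 0 < dot (line x) (line x).
Proof.
rewrite lt_def dot_self_ge0 andbT; apply/eqP => /dot_self_eq0 line0.
case: arrangement => L_neq0 _; apply: (negP (L_neq0 x.1 x.2)); apply/eqP.
by apply: coords_inj; rewrite -/(line x) line0 /coords !mxE.
Qed.

Lemma line_cross_gt0 x y : x != y ->
  0 < dot (cross (line x) (line y)) (cross (line x) (line y)).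
Proof.
move=> xy; rewrite lt_def dot_self_ge0 andbT; apply/eqP => cross0.
have y_par := cross_eq0_parallel cross0 (line_self_gt0 x).
case: arrangement => _ L_indep; apply: (L_indep x.1 x.2 y.1 y.2).
  by rewrite -!surjective_pairing.
exists (dot (line x) (line y) / dot (line x) (line x)); apply: coords_inj.
by rewrite -/(line y) {1}y_par /line /coords !mxE.
Qed.

Lemma meet_in_net x y : x.1 != y.1 -> X (point_of (cross (line x) (line y))).
Proof.
move=> xy; case: net => _ [_ [meet _]]; apply: (meet _ _ x.2 y.2 xy).
- by apply/point_of_neq0/line_cross_gt0; apply: contraNneq xy => ->.
- exact/on_line_point_of/dot_cross_l.
- exact/on_line_point_of/dot_cross_r.
Qed.

Lemma net_line_unique p i a b : X p ->
  on_line (L i a) p -> on_line (L i b) p -> a = b.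
Proof.
case: net => _ [_ [_ [unique _]]] /unique /(_ i) [c [_ c_uniq]] ia ib.
by rewrite -(c_uniq a ia) (c_uniq b ib).
Qed.

Lemma net_line_through p i : X p -> exists a, on_line (L i a) p.
Proof. by case: net => _ [_ [_ [unique _]]] /unique /(_ i) [a []]; exists a. Qed.

Definition line_triple := (('I_4 * 'I_d) * ('I_4 * 'I_d) * ('I_4 * 'I_d))%type.

Definition off_meet (t : line_triple) : bool :=
  let: (x, y, z) := t in (x.1 != y.1) && (dot (line z) (cross (line x) (line y)) != 0).

Definition meet_cos2 (t : line_triple) : R :=
  let: (x, y, z) := t in cos2 (line z) (cross (line x) (line y)).

Lemma exists_off_meet : exists t, off_meet t.
Proof.
case: net => two_le_d _.
pose a0 : 'I_d := Ordinal (ltnW two_le_d); pose a1 : 'I_d := Ordinal two_le_d.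
pose c1 : 'I_4 := @Ordinal 4 1 isT.
exists ((ord0, a0), (c1, a0), (ord0, a1)); apply/andP; split=> //; apply/eqP => through.
have P_in := meet_in_net (x := (ord0, a0)) (y := (c1, a0)) isT.
have := net_line_unique P_in ((on_line_point_of _ _).2 (dot_cross_l _ _))
  ((on_line_point_of _ _).2 through).
by move/(congr1 val).
Qed.

Lemma off_meet_descent t :
  off_meet t -> exists t', off_meet t' /\ meet_cos2 t' < meet_cos2 t.
Proof.
case: t => [[x y] z] /andP[xy z_off] /=.
set P := cross (line x) (line y) in z_off *.
have P_in : X (point_of P) := meet_in_net xy.
have through k : exists a, dot (line (lift z.1 k, a)) P = 0.
  by have [a /on_line_point_of] := net_line_through (lift z.1 k) P_in; exists a.
have [a m_through] := fin_all_exists through.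
pose m k := line (lift z.1 k, a k).
have m_indep k l : k != l -> 0 < dot (cross (m k) (m l)) (cross (m k) (m l)).
  move=> kl; apply: line_cross_gt0; apply: contraNneq kl => /(congr1 fst) /=.
  by move/lift_inj => ->.
have [k [l [kl [l_off closer]]]] := kelly_step z_off m_through m_indep.
exists ((lift z.1 k, a k), z, (lift z.1 l, a l)); split=> //.
by rewrite /= eq_sym neq_lift.
Qed.

End RealNet.

Theorem theorem5p2 (R : realType) (d : nat) (L : 'I_4 -> 'I_d -> 'rV[R]_3)
    (X : 'rV[R[i]]_3 -> Prop) :
  real_arrangement4 L -> ~ is_4net L X.
Proof.
move=> arrangement net.
have [t0 t0_off] := exists_off_meet arrangement net.
have [t t_off t_min] := arg_minP (meet_cos2 L) t0_off.
have [t' [t'_off t'_lt]] := off_meet_descent arrangement net t_off.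
by have := t_min t' t'_off; rewrite leNgt t'_lt.
Qed.
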